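(* In the setting and notation described in the context, let $c\in G_n/\!/K_n$ and $d\in G_k/\!/K_k$ with representatives $g\in G_n$, $h\in G_k$. Then $$B[c]*B[d]=\sum_{\lambda\in\mathrm{PB}(J_k,J_n)} B\big[\,\overline{\overline{g\circledast_\lambda h}}\,\big].$$
   Context: Let $I$ be a finite set, $X$ a finite or countable set, $V=X\sqcup(I\times\mathbb{N})$, $V_n=X\sqcup(I\times J_n)$ with $J_n=\{1,\dots,n\}$. $S_\infty$ (finitely supported permutations of $\mathbb{N}$) acts on $V$ by $\sigma(i,m)=(i,\sigma(m))$ on $I\times\mathbb{N}$ and trivially on $X$; $S_n\subset S_\infty$ permutes $J_n$. $G_\infty$ is a subgroup of the group of finitely supported permutations of $V$ containing $S_\infty$; $G_n$ is the set of elements of $G_\infty$ fixing every point outside $V_n$; $K_n=S_n$; $G_n/\!/K_n$ is the set of orbits of $K_n$ on $G_n$ under conjugation, and $\overline{\overline{r}}$ denotes the class of $r$. Local bijections: a local bijection is a pair $((\omega,\Omega))$ where $\Omega=X\cup(I\times F)$ for a finite $F\subset\mathbb{N}$ and $\omega:\Omega\to\Omega$ is a bijection; $\tilde\omega$ denotes its extension to $V$ fixing all points outside $\Omega$. Their product is $((\omega,\Omega))\circ((\mu,M))=((\tilde\omega\tilde\mu|_{\Omega\cup M},\Omega\cup M))$. Consider formal series $\sum a_{((\omega,\Omega))}((\omega,\Omega))$ with complex coefficients, with convolution $\big(\sum a\,((\omega,\Omega))\big)*\big(\sum b\,((\mu,M))\big)=\sum c_{((\nu,N))}((\nu,N))$,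 $c_{((\nu,N))}=\sum a_{((\omega,\Omega))}b_{((\mu,M))}$ over pairs with $\Omega\cup M=N$ and $\tilde\omega\tilde\mu=\tilde\nu$ (these sums are finite for the products below). For an injective map $\sigma:J_n\to\mathbb{N}$, extend it to the bijection $V_n\to X\cup(I\times\sigma(J_n))$, $(i,m)\mapsto(i,\sigma(m))$, identity on $X$; for $g\in G_n$ write $\sigma((g,V_n))\sigma^{-1}=((\sigma g\sigma^{-1},X\cup(I\times\sigma(J_n))))$. For $c\in G_n/\!/K_n$ with representative $g$ define $B[c]=\sum_{\Omega\subset\mathbb{N},\,\#\Omega=n}\ \sum_{\sigma:J_n\to\Omega\text{ bijective}}\sigma((g,V_n))\sigma^{-1}$ (independent of the representative). A partial bijection $Y\to Z$ is a bijection between a subset $\mathrm{dom}\,\lambda\subseteq Y$ and a subset $\mathrm{im}\,\lambda\subseteq Z$ (empty allowed), $\mathrm{rk}\,\lambda=\#\mathrm{dom}\,\lambda$; $\mathrm{PB}(Y,Z)$ is the set of them; composition: $w\in\mathrm{dom}(\lambda\mu)$ iff $w\in\mathrm{dom}\,\mu$ and $\mu(w)\in\mathrm{dom}\,\lambda$, then $\lambda\mu(w)=\lambda(\mu(w))$. Injective maps and their inverses are viewed as partial bijections. For $g\in G_n$, $h\in G_k$ and $\lambda\in\mathrm{PB}(J_k,J_n)$ of rank $d$, choose injective maps $\sigma_0:J_n\to J_{n+k-d}$, $\tau_0:J_k\to J_{n+k-d}$ with $\sigma_0^{-1}\tau_0=\lambda$ as partial bijections, and let $\overline{\overline{g\circledast_\lambda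 h}}\in G_{n+k-d}/\!/K_{n+k-d}$ be the class of the permutation $\tilde\nu$ where $((\nu,V_{n+k-d}))=\sigma_0((g,V_n))\sigma_0^{-1}\circ\tau_0((h,V_k))\tau_0^{-1}$; this class does not depend on the choice of $\sigma_0,\tau_0$. *)

From HB Require Import structures.
From mathcomp Require Import all_boot all_order all_algebra.
From mathcomp Require Import finmap.
From Stdlib Require ClassicalEpsilon List.
Set Implicit Arguments. Unset Strict Implicit. Unset Printing Implicit Defensive.
Import GRing.Theory Num.Theory.
Local Open Scope ring_scope.
Local Open Scope fset_scope.

Section Defs.
Variables (I : finType) (X : countType).

(* V = X ⊔ (I × ℕ); ℕ is modelled by nat, J_n = {0,..,n-1}. *)
Definition V := (X + (I * nat))%type.

Definition inV (n : nat) (v : V) : bool :=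
  match v with inl _ => true | inr (_, m) => (m < n)%N end.

Definition inOmega (F : {fset nat}) (v : V) : bool :=
  match v with inl _ => true | inr (_, m) => m \in F end.

Definition fin_suppV (f : V -> V) : Prop :=
  exists s : seq V, forall v, v \notin s -> f v = v.
Definition fin_suppN (p : nat -> nat) : Prop :=
  exists s : seq nat, forall m, m \notin s -> p m = m.

Definition SinfV (p : nat -> nat) (v : V) : V :=
  match v with inl x => inl x | inr (i, m) => inr (i, p m) end.

Definition is_Ginf (G : (V -> V) -> Prop) : Prop :=
  [/\ (forall f, G f -> bijective f /\ fin_suppV f),
      G id,
      (forall f g, G f -> G g -> G (f \o g)),
      (forall f f', G f -> cancel f f' -> cancel f' f -> G f') &
      (forall p, bijective p -> fin_suppN p -> G (SinfV p))].

Definition inGn (G : (V -> V) -> Prop) (n : nat) (g : V -> V) : Prop :=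
  G g /\ (forall v, ~~ inV n v -> g v = v).

(* Local bijections ((ω,Ω)), Ω = X ∪ (I×F), represented by (F, ω~) where ω~
   is the extension of ω to V fixing every point outside Ω. *)
Definition LB := ({fset nat} * (V -> V))%type.
Definition is_LB (x : LB) : Prop :=
  bijective x.2 /\ (forall v, ~~ inOmega x.1 v -> x.2 v = v).

Section Series.
Variable C : numClosedFieldType.

Definition series := LB -> C.

Definition has_fsum (A : Type) (P : A -> Prop) (f : A -> C) (s : C) : Prop :=
  exists l : seq A,
    [/\ List.NoDup l, (forall a, List.In a l -> P a),
        (forall a, P a -> f a <> 0 -> List.In a l) & s = \sum_(a <- l) f a].

Definition is_conv (a b c : series) : Prop :=
  forall nu : LB,
    has_fsum (fun p : LB * LB =>
                [/\ is_LB p.1, is_LB p.2, p.1.1 `|` p.2.1 = nu.1 &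
                    p.1.2 \o p.2.2 = nu.2])
             (fun p => a p.1 * b p.2) (c nu).

Definition pind (P : Prop) : C :=
  if ClassicalEpsilon.excluded_middle_informative P then 1 else 0.

Definition sV (n : nat) (s : 'I_n -> nat) (v : V) : V :=
  match v with
  | inl x => inl x
  | inr (i, m) => match (insub m : option 'I_n) with
                  | Some j => inr (i, s j)
                  | None => v end
  end.

(* the permutation σ g σ^{-1} of X ∪ (I × σ(J_n)), extended by the identity *)
Definition conjV (n : nat) (s : 'I_n -> nat) (g : V -> V) (v : V) : V :=
  match v with
  | inl _ => sV s (g v)
  | inr (i, m) => match [pick j : 'I_n | s j == m] with
                  | Some j => sV s (g (inr (i, nat_of_ord j)))
                  | None => v end
  end.

(* B[c] for the class c of g in G_n//K_n:
   sum over Ω ⊂ ℕ, #Ω = n, and bijections σ : J_n -> Ω of σ((g,V_n))σ^{-1};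
   its coefficient at ((ν,N)) counts the σ : J_n -> N bijective with
   σ g σ^{-1} = ν. *)
Definition Bser (n : nat) (g : V -> V) : series :=
  fun x => \sum_(s : {ffun 'I_n -> x.1} | injectiveb s && (#|` x.1| == n)%N)
             pind (conjV (fun j => val (s j)) g = x.2).

Definition isPB (k n : nat) (l : {ffun 'I_k -> option 'I_n}) : bool :=
  [forall j1, forall j2, ((l j1 != None) && (l j1 == l j2)) ==> (j1 == j2)].
Definition rkPB (k n : nat) (l : {ffun 'I_k -> option 'I_n}) : nat :=
  #|[pred j | l j != None]|.

Definition choiceOK (k n : nat) (l : {ffun 'I_k -> option 'I_n})
    (s0 : 'I_n -> nat) (t0 : 'I_k -> nat) : Prop :=
  [/\ injective s0, injective t0,
      (forall i, s0 i < n + k - rkPB l)%N,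
      (forall j, t0 j < n + k - rkPB l)%N &
      (forall j i, l j = Some i <-> t0 j = s0 i)].

End Series.
End Defs.

From HB Require Import structures.
From mathcomp Require Import all_boot all_order all_algebra.
From mathcomp Require Import finmap.
From Stdlib Require Import ClassicalEpsilon FunctionalExtensionality.
Set Implicit Arguments. Unset Strict Implicit. Unset Printing Implicit Defensive.

(* The coefficient of [B[c] * B[d]] at ((ν, N)) counts the pairs of
   injections σ : J_n -> N, τ : J_k -> N whose images cover N and with
   σ g σ^-1 ∘ τ h τ^-1 = ν, since each product of coefficients counts the pairs
   (σ, τ) yielding that pair of local bijections.  Sort these pairs by the
   partial bijection λ = σ^-1 τ.  As J_(n+k-d) is the pushout of σ0 and τ0, the
   pairs with a given λ are the restrictions (ρ σ0, ρ τ0) of the bijections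
   ρ : J_(n+k-d) -> N, and (ρ σ0) g (ρ σ0)^-1 ∘ (ρ τ0) h (ρ τ0)^-1 = ρ (g ⊛_λ h) ρ^-1;
   so they are counted by the coefficient of B[g ⊛_λ h] at ((ν, N)). *)

Section Conjugation.
Variables (I : finType) (X : countType).
Local Notation V := (V I X).

Definition preserves_inV (n : nat) (f : V -> V) := forall v, inV n v -> inV n (f v).

Lemma sV_ord M (s : 'I_M -> nat) i (j : 'I_M) :
  sV s (inr (i, nat_of_ord j) : V) = inr (i, s j).
Proof. by rewrite /sV valK. Qed.

Lemma inV_ordP M (w : V) :
  inV M w -> (exists x, w = inl x) \/ (exists i (j : 'I_M), w = inr (i, nat_of_ord j)).
Proof.
case: w => [x|[i m] Hm]; first by left; exists x.
by right; exists i, (Ordinal Hm).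
Qed.

Lemma inV_sV M M' (s : 'I_M -> nat) (w : V) :
  (forall j, s j < M')%N -> inV M w -> inV M' (sV s w).
Proof.
by move=> Hs /inV_ordP [[x ->]|[i [j ->]]] //; rewrite sV_ord; apply: Hs.
Qed.

Lemma conjV_im M (s : 'I_M -> nat) phi i (j : 'I_M) : injective s ->
  conjV s phi (inr (i, s j) : V) = sV s (phi (inr (i, nat_of_ord j))).
Proof.
move=> inj; rewrite /conjV; case: pickP => [j' /eqP /inj -> //|/(_ j)].
by rewrite eqxx.
Qed.

Lemma conjV_out M (s : 'I_M -> nat) phi i m : (forall j, s j != m) ->
  conjV s phi (inr (i, m) : V) = inr (i, m).
Proof.
by move=> H; rewrite /conjV; case: pickP => // j; rewrite (negbTE (H j)).
Qed.

Lemma conjV_sV M (s : 'I_M -> nat) phi (w : V) : injective s -> inV M w ->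
  conjV s phi (sV s w) = sV s (phi w).
Proof.
by move=> inj /inV_ordP [[x ->]|[i [j ->]]] //; rewrite sV_ord conjV_im.
Qed.

Lemma sV_image_cases M (s : 'I_M -> nat) (v : V) :
  (exists2 w, inV M w & v = sV s w) \/
  (exists i m, v = inr (i, m) /\ forall j, s j != m).
Proof.
case: v => [x|[i m]]; first by left; exists (inl x).
case: (pickP (fun j => s j == m)) => [j /eqP E|H].
  by left; exists (inr (i, nat_of_ord j)); [exact: ltn_ord | rewrite sV_ord E].
by right; exists i, m; split => // j; rewrite H.
Qed.

Lemma conjV_comp M (s : 'I_M -> nat) phi1 phi2 : injective s -> preserves_inV M phi2 ->
  forall v, conjV s (phi1 \o phi2) v = conjV s phi1 (conjV s phi2 v).
Proof.
move=> inj H2 v; case: (sV_image_cases s v) => [[w Hw ->]|[i [m [-> Hm]]]].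
  by rewrite !conjV_sV //; apply: H2.
by rewrite !conjV_out.
Qed.

Lemma conjV_id M (s : 'I_M -> nat) : injective s -> conjV s (@id V) =1 id.
Proof.
move=> inj v; case: (sV_image_cases s v) => [[w Hw ->]|[i [m [-> Hm]]]].
  by rewrite conjV_sV.
by rewrite conjV_out.
Qed.

Lemma eq_conjV M (s : 'I_M -> nat) (f1 f2 : V -> V) : f1 =1 f2 ->
  conjV s f1 =1 conjV s f2.
Proof.
move=> E [x|[i m]]; rewrite /conjV ?E //.
by case: pickP => // j _; rewrite E.
Qed.

Lemma preserves_conjV n M (s : 'I_n -> nat) g : injective s ->
  (forall j, s j < M)%N -> preserves_inV n g -> preserves_inV M (conjV s g).
Proof.
move=> inj Hs Hg v; case: (sV_image_cases s v) => [[w Hw ->]|[i [m [-> Hm]]]] Hv.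
  by rewrite conjV_sV //; apply: inV_sV => //; apply: Hg.
by rewrite conjV_out.
Qed.

Lemma conjV_conj n M (s0 : 'I_n -> nat) (sg : 'I_M -> nat) (tau : 'I_n -> nat)
    (Hb : forall a, (s0 a < M)%N) g :
  injective s0 -> injective sg -> preserves_inV n g ->
  (forall a, tau a = sg (Ordinal (Hb a))) ->
  conjV sg (conjV s0 g) =1 conjV tau g.
Proof.
move=> i0 isg Hg Ht.
have it : injective tau by move=> a b; rewrite !Ht => /isg [] /i0.
have sV_tau (w : V) : inV n w -> sV sg (sV s0 w) = sV tau w.
  move=> /inV_ordP [[x ->]|[i [j ->]]] //.
  by rewrite !sV_ord Ht (sV_ord sg i (Ordinal (Hb j))).
move=> v; case: (sV_image_cases tau v) => [[w Hw ->]|[i [m [-> Hm]]]].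
  rewrite conjV_sV // -sV_tau // conjV_sV //; last exact: inV_sV.
  by rewrite conjV_sV // sV_tau //; apply: Hg.
rewrite [RHS]conjV_out //.
case: (sV_image_cases sg (inr (i, m))) => [[w /inV_ordP Hw E]|[i' [m' [E Hm']]]].
  case: Hw E => [[x ->]//|[i' [j ->]]]; rewrite sV_ord => -[_ Em]; subst m.
  rewrite conjV_im // conjV_out ?sV_ord // => a; apply/eqP => E.
  by have /eqP[] := Hm a; rewrite Ht (_ : Ordinal _ = j) //; apply: val_inj.
by case: E => _ Em; subst m'; rewrite conjV_out.
Qed.

Lemma preserves_of_fixed n (f : V -> V) : bijective f ->
  (forall v, ~~ inV n v -> f v = v) -> preserves_inV n f.
Proof.
move=> [f' fK f'K] Hf v Hv; apply/negPn/negP => Hfv.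
have /(congr1 f') := Hf _ Hfv; rewrite !fK => E.
by move: Hfv; rewrite E Hv.
Qed.

Lemma fixed_inv n (f f' : V -> V) : cancel f f' ->
  (forall v, ~~ inV n v -> f v = v) -> forall v, ~~ inV n v -> f' v = v.
Proof. by move=> fK Hf v Hv; rewrite -{1}(Hf _ Hv) fK. Qed.

End Conjugation.

Import GRing.Theory.
Local Open Scope ring_scope.

Definition propb (P : Prop) : bool :=
  if excluded_middle_informative P then true else false.

Lemma propbP P : reflect P (propb P).
Proof. by rewrite /propb; case: excluded_middle_informative => H; constructor. Qed.

Lemma pindE (C : numClosedFieldType) P : pind C P = (propb P)%:R.
Proof. by rewrite /pind /propb; case: excluded_middle_informative. Qed.

Lemma sum_pind (C : numClosedFieldType) (T : finType) (P : pred T) (Q : T -> Prop) :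
  \sum_(x | P x) pind C (Q x) = \sum_(x | P x && propb (Q x)) 1.
Proof. by rewrite big_mkcondr; apply: eq_bigr => x _; rewrite pindE; case: propb. Qed.

Lemma sum_neq0_exists (M : nmodType) (T : finType) (P : pred T) (F : T -> M) :
  \sum_(x | P x) F x != 0 -> exists x, P x.
Proof.
case: (pickP P) => [x Px _|H]; first by exists x.
by rewrite big_pred0 ?eqxx.
Qed.

Definition classicEq (T : Type) := T.
Definition classic_eqb T (x y : classicEq T) : bool := propb (x = y).
Lemma classic_eqP T : Equality.axiom (@classic_eqb T).
Proof. by move=> x y; apply: propbP. Qed.
HB.instance Definition _ T := hasDecEq.Build (classicEq T) (@classic_eqP T).

Lemma List_In_mem (T : eqType) (s : seq T) a : List.In a s <-> a \in s.
Proof.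
elim: s => //= b s IH; rewrite in_cons; split.
  by case=> [->|/IH ->]; rewrite ?eqxx ?orbT.
by case/orP => [/eqP ->|/IH]; auto.
Qed.

Lemma uniq_NoDup (T : eqType) (s : seq T) : uniq s -> List.NoDup s.
Proof.
elim: s => [|a s IH] /=; first by constructor.
case/andP => nas us; constructor; last exact: IH.
by move/List_In_mem; rewrite (negbTE nas).
Qed.

Local Open Scope fset_scope.

Definition im_fset n (u : 'I_n -> nat) : {fset nat} := [fset x in map u (enum 'I_n)].

Lemma im_fsetP n (u : 'I_n -> nat) x : reflect (exists j, u j = x) (x \in im_fset u).
Proof.
rewrite /im_fset in_fset /=; apply: (iffP mapP) => [[j _ ->]|[j <-]]; first by exists j.
by exists j; rewrite ?mem_enum.
Qed.

Lemma eq_im_fset n (u u' : 'I_n -> nat) : u =1 u' -> im_fset u = im_fset u'.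
Proof. by move=> E; rewrite /im_fset (eq_map E). Qed.

Lemma card_im_fset n (u : 'I_n -> nat) : injective u -> #|` im_fset u| = n.
Proof.
move=> iu; rewrite /im_fset card_fseq undup_id; last by rewrite map_inj_uniq // enum_uniq.
by rewrite size_map -cardT card_ord.
Qed.

Definition valfun n (N : {fset nat}) (s : 'I_n -> N) : 'I_n -> nat := fun j => val (s j).

Lemma valfun_inj n (N : {fset nat}) (s : 'I_n -> N) : injective s -> injective (valfun s).
Proof. by move=> is' a b /val_inj /is'. Qed.

Lemma im_fset_sub n (N : {fset nat}) (s : 'I_n -> N) : im_fset (valfun s) `<=` N.
Proof. by apply/fsubsetP => x /im_fsetP [j <-]; apply: fsvalP. Qed.

Lemma im_fset_eq_card n (N : {fset nat}) (s : 'I_n -> N) :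
  injective s -> (im_fset (valfun s) == N) = (#|` N| == n)%N.
Proof.
move=> is'; have card_im := card_im_fset (valfun_inj is').
have le_nN := fsubset_leq_card (im_fset_sub s); rewrite card_im in le_nN.
by rewrite eqEfcard im_fset_sub card_im eqn_leq le_nN andbT.
Qed.

Lemma sum_inj_fset_incl (C : numClosedFieldType) n (F N : {fset nat}) (sub : F `<=` N)
    (Phi : ('I_n -> nat) -> C) :
  \sum_(s : {ffun 'I_n -> F} | injectiveb s && (#|` F| == n)%N) Phi (valfun s) =
  \sum_(s : {ffun 'I_n -> N} | injectiveb s && (im_fset (valfun s) == F)) Phi (valfun s).
Proof.
pose h (s : {ffun 'I_n -> F}) : {ffun 'I_n -> N} := [ffun j => fincl sub (s j)].
have hv s : valfun (h s) =1 valfun s by move=> j; rewrite /valfun ffunE.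
have hinj : injective h.
  move=> s1 s2 E; apply/ffunP => j; apply: val_inj.
  by move: (hv s1 j) (hv s2 j); rewrite /valfun E => <- <-.
rewrite (eq_bigr (fun s : {ffun 'I_n -> F} => Phi (valfun (h s)))); last first.
  by move=> s _; congr Phi; apply: functional_extensionality => j; rewrite hv.
rewrite -(big_imset (fun s : {ffun 'I_n -> N} => Phi (valfun s)) (in2W hinj)) /=.
apply: eq_bigl => s; apply/imsetP/andP => [[s1]|[/injectiveP is' /eqP HF]].
  move=> /andP [/injectiveP is1 cF] ->.
  have ih : injective (h s1).
    by move=> a b Eab; apply: (valfun_inj is1); rewrite -(hv s1 a) -(hv s1 b) /valfun Eab.
  split; first exact/injectiveP.
  by rewrite (eq_im_fset (hv s1)) im_fset_eq_card.
have ex j : exists y : F, val y = val (s j).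
  have Hj : val (s j) \in F by rewrite -HF; apply/im_fsetP; exists j.
  by exists [` Hj].
have [s1 Hs1] := fin_all_exists ex.
have is1 : injective (finfun s1).
  by move=> a b; rewrite !ffunE => /(congr1 val); rewrite !Hs1 => /val_inj /is'.
exists (finfun s1); last by apply/ffunP => j; apply: val_inj; rewrite ffunE /= ffunE Hs1.
rewrite unfold_in /=; apply/andP; split; first exact/injectiveP.
rewrite -(im_fset_eq_card is1).
by apply/eqP; rewrite -[RHS]HF; apply: eq_im_fset => j; rewrite /valfun ffunE Hs1.
Qed.

Lemma is_LB_conjV (I : finType) (X : countType) n (u : 'I_n -> nat) (g : V I X -> V I X) :
  injective u -> bijective g -> (forall v, ~~ inV n v -> g v = v) ->
  is_LB (im_fset u, conjV u g).
Proof.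
move=> iu bg fg; have pg := preserves_of_fixed bg fg.
case: (bg) => g' gK g'K.
have pg' : preserves_inV n g' := preserves_of_fixed (Bijective g'K gK) (fixed_inv gK fg).
split.
  exists (conjV u g') => v /=.
    by rewrite -conjV_comp // (@eq_conjV _ _ _ _ _ id) ?conjV_id // => w /=; rewrite gK.
  by rewrite -conjV_comp // (@eq_conjV _ _ _ _ _ id) ?conjV_id // => w /=; rewrite g'K.
case=> [x|[i m] Hm] //; change (conjV u g (inr (i, m)) = inr (i, m)).
by rewrite conjV_out // => j; apply: contra Hm => /eqP <-; apply/im_fsetP; exists j.
Qed.

Lemma Bser_neq0_image (C : numClosedFieldType) (I : finType) (X : countType) n
    (g f : V I X -> V I X) (F N : {fset nat}) :
  F `<=` N -> Bser C n g (F, f) != 0 ->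
  exists s : {ffun 'I_n -> N}, [/\ injective s, im_fset (valfun s) = F & conjV (valfun s) g = f].
Proof.
move=> sub; rewrite /Bser /= (sum_inj_fset_incl sub (fun u => pind C (conjV u g = f))) sum_pind.
by move/sum_neq0_exists => [s /andP [/andP [/injectiveP iS /eqP Es] /propbP Cs]]; exists s.
Qed.

Section Amalgamation.
Variables (n k M : nat) (a : 'I_n -> 'I_M) (b : 'I_k -> 'I_M).
Hypotheses (a_inj : injective a) (b_inj : injective b)
  (ab_cover : forall m, (exists i, a i = m) \/ (exists j, b j = m)).

Definition split_ffun (T : Type) (s : {ffun 'I_M -> T}) :
    {ffun 'I_n -> T} * {ffun 'I_k -> T} :=
  ([ffun i => s (a i)], [ffun j => s (b j)]).

Lemma split_ffun_inj T : injective (@split_ffun T).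
Proof.
move=> s1 s2 E; apply/ffunP => m; case: (ab_cover m) => [[i <-]|[j <-]].
  by move/(congr1 fst)/ffunP/(_ i): E; rewrite !ffunE.
by move/(congr1 snd)/ffunP/(_ j): E; rewrite !ffunE.
Qed.

Lemma im_fset_split (N : {fset nat}) (s : {ffun 'I_M -> N}) :
  im_fset (valfun (split_ffun s).1) `|` im_fset (valfun (split_ffun s).2) =
  im_fset (valfun s).
Proof.
apply/fsetP => y; apply/fsetUP/im_fsetP => [[]|[m <-]].
- by move=> /im_fsetP [i <-]; exists (a i); rewrite /valfun ffunE.
- by move=> /im_fsetP [j <-]; exists (b j); rewrite /valfun ffunE.
case: (ab_cover m) => [[i <-]|[j <-]]; [left|right]; apply/im_fsetP.
  by exists i; rewrite /valfun ffunE.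
by exists j; rewrite /valfun ffunE.
Qed.

(* [J_M] is the pushout of [a] and [b]. *)
Lemma split_ffun_onto (T : Type) (x : {ffun 'I_n -> T} * {ffun 'I_k -> T}) :
  injective x.1 -> injective x.2 -> (forall i j, x.1 i = x.2 j <-> b j = a i) ->
  exists2 s : {ffun 'I_M -> T}, injective s & split_ffun s = x.
Proof.
move=> i1 i2 hx.
have ex m : exists y : T,
    (forall i, a i = m -> y = x.1 i) /\ (forall j, b j = m -> y = x.2 j).
  case: (ab_cover m) => [[i <-]|[j <-]].
    by exists (x.1 i); split => [i' /a_inj -> // | j Ej]; apply/hx.
  by exists (x.2 j); split => [i Ei | j' /b_inj -> //]; apply/esym/hx.
have [sf Hsf] := fin_all_exists ex.
have sa i : sf (a i) = x.1 i := (Hsf _).1 i erefl.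
have sb j : sf (b j) = x.2 j := (Hsf _).2 j erefl.
exists (finfun sf).
  move=> m1 m2; rewrite !ffunE.
  case: (ab_cover m1) (ab_cover m2) => [[i1' <-]|[j1 <-]] [[i2' <-]|[j2 <-]];
    rewrite ?sa ?sb.
  - by move/i1 ->.
  - by move/hx ->.
  - by move/esym/hx ->.
  - by move/i2 ->.
by apply: injective_projections; apply/ffunP => ?; rewrite /= !ffunE ?sa ?sb.
Qed.

End Amalgamation.

Section ChoiceOfEmbeddings.
Variables (I : finType) (X : countType).
Local Notation V := (V I X).
Variables (n k : nat) (l : {ffun 'I_k -> option 'I_n}) (s0 : 'I_n -> nat) (t0 : 'I_k -> nat).
Local Notation M := (n + k - rkPB l)%N.
Hypotheses (s0_inj : injective s0) (t0_inj : injective t0)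
  (s0_lt : forall i, (s0 i < M)%N) (t0_lt : forall j, (t0 j < M)%N)
  (l_st0 : forall j i, l j = Some i <-> t0 j = s0 i).

Definition s0o (i : 'I_n) : 'I_M := Ordinal (s0_lt i).
Definition t0o (j : 'I_k) : 'I_M := Ordinal (t0_lt j).

Lemma s0o_inj : injective s0o.
Proof. by move=> i i' /(congr1 val) /s0_inj. Qed.

Lemma t0o_inj : injective t0o.
Proof. by move=> j j' /(congr1 val) /t0_inj. Qed.

Lemma t0o_s0o i j : t0o j = s0o i <-> l j = Some i.
Proof. by rewrite l_st0; split => [/(congr1 val)|E]; last exact: val_inj. Qed.

(* The images of [s0] and [t0] meet in [rkPB l] points, hence by
   inclusion-exclusion they cover all [n + k - rkPB l] points of [J_M]. *)
Lemma s0o_t0o_cover m : (exists i, s0o i = m) \/ (exists j, t0o j = m).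
Proof.
pose A := s0o @: [set: 'I_n]; pose B := t0o @: [set: 'I_k].
have cA : #|A| = n by rewrite card_imset ?cardsT ?card_ord //; apply: s0o_inj.
have cB : #|B| = k by rewrite card_imset ?cardsT ?card_ord //; apply: t0o_inj.
have AB : A :&: B = t0o @: [set j | l j != None].
  apply/setP => m'; rewrite inE; apply/andP/imsetP.
    case=> /imsetP [i _ ->] /imsetP [j _ Eij]; exists j => //.
    by move/esym/t0o_s0o: Eij; rewrite inE => ->.
  case=> j; rewrite inE => Hj ->; case E: (l j) Hj => [i|] // _.
  by split; apply/imsetP; [exists i | exists j] => //; apply/t0o_s0o.
have cAB : #|A :&: B| = rkPB l.
  by rewrite AB card_imset; [apply: eq_card => j; rewrite inE | apply: t0o_inj].
have ABT : A :|: B = setT.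
  by apply/eqP; rewrite eqEcard subsetT cardsT card_ord cardsU cA cB cAB leqnn.
have : m \in A :|: B by rewrite ABT inE.
by case/setUP => /imsetP [i _ ->]; [left|right]; exists i.
Qed.

Lemma conjV_split (g h : V -> V) (N : {fset nat}) (s : {ffun 'I_M -> N}) :
  preserves_inV n g -> preserves_inV k h -> injective s ->
  conjV (valfun s) (conjV s0 g \o conjV t0 h) =
  conjV (valfun (split_ffun s0o t0o s).1) g \o conjV (valfun (split_ffun s0o t0o s).2) h.
Proof.
move=> pg ph iS; apply: functional_extensionality => v.
have ivs := valfun_inj iS.
rewrite conjV_comp //; last exact: preserves_conjV.
rewrite /= (@conjV_conj _ _ _ _ _ _ (valfun (split_ffun s0o t0o s).1) s0_lt g) //;
  last by move=> i; rewrite /valfun ffunE.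
by rewrite (@conjV_conj _ _ _ _ _ _ (valfun (split_ffun s0o t0o s).2) t0_lt h) // => j;
  rewrite /valfun ffunE.
Qed.

End ChoiceOfEmbeddings.

Section Counting.
Variables (C : numClosedFieldType) (I : finType) (X : countType).
Local Notation V := (V I X).
Variables (n k : nat) (g h : V -> V).
Hypotheses (g_bij : bijective g) (h_bij : bijective h)
  (g_fix : forall v, ~~ inV n v -> g v = v) (h_fix : forall v, ~~ inV k v -> h v = v).
Variables (N : {fset nat}) (nu : V -> V).

Local Notation embeddings := ({ffun 'I_n -> N} * {ffun 'I_k -> N})%type.

Definition admissible (x : embeddings) : bool :=
  [&& injectiveb x.1, injectiveb x.2,
      im_fset (valfun x.1) `|` im_fset (valfun x.2) == N &
      propb (conjV (valfun x.1) g \o conjV (valfun x.2) h = nu)].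

Definition pb_of (x : embeddings) : {ffun 'I_k -> option 'I_n} :=
  [ffun j => [pick i | x.1 i == x.2 j]].

Lemma pb_ofP (x : embeddings) (l : {ffun 'I_k -> option 'I_n}) : injective x.1 ->
  pb_of x = l <-> (forall i j, x.1 i = x.2 j <-> l j = Some i).
Proof.
move=> i1; split => [<- i j|hl].
  rewrite ffunE; case: pickP => [i' /eqP E|/(_ i) /negbT /eqP Hne]; last first.
    by split => // /Hne.
  by split => [Ei|[<-]] //; congr Some; apply: i1; rewrite E Ei.
apply/ffunP => j; rewrite ffunE; case: pickP => [i /eqP /hl //|none].
by case E: (l j) => [i|] //; have /eqP := none i; rewrite (proj2 (hl i j) E).
Qed.

Lemma isPB_pb_of (x : embeddings) : injective x.2 -> isPB (pb_of x).
Proof.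
move=> i2; apply/forallP => j1; apply/forallP => j2; apply/implyP.
rewrite !ffunE; case: pickP => [i /eqP E1|//] /andP [_ /eqP].
by case: pickP => [i' /eqP E2 [Ei]|//]; apply/eqP/i2; rewrite -E1 -E2 Ei.
Qed.

Lemma Bser_class l s0 t0 : choiceOK l s0 t0 ->
  Bser C (n + k - rkPB l) (conjV s0 g \o conjV t0 h) (N, nu) =
  \sum_(x | admissible x && (pb_of x == l)) 1.
Proof.
case=> s0_inj t0_inj s0_lt t0_lt l_st0.
have pg := preserves_of_fixed g_bij g_fix; have ph := preserves_of_fixed h_bij h_fix.
have split_conj := conjV_split s0_inj t0_inj s0_lt t0_lt pg ph.
have ab_l := t0o_s0o s0_lt t0_lt l_st0.
have cover := s0o_t0o_cover s0_inj t0_inj s0_lt t0_lt l_st0.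
set a := s0o s0_lt in split_conj ab_l cover *; set b := t0o t0_lt in split_conj ab_l cover *.
have a_inj : injective a by apply: s0o_inj.
have b_inj : injective b by apply: t0o_inj.
have split_inj : injective (@split_ffun _ _ _ a b N) by apply: split_ffun_inj.
rewrite /Bser /= sum_pind -(big_imset (fun=> 1) (in2W split_inj)) /=.
apply: eq_bigl => x; apply/imsetP/andP => [[s]|[]].
  rewrite unfold_in /= => /andP [/andP [/injectiveP iS cN] /propbP Hc] ->.
  split.
    apply/and4P; split.
    - by apply/injectiveP => i i'; rewrite !ffunE => /iS /a_inj.
    - by apply/injectiveP => j j'; rewrite !ffunE => /iS /b_inj.
    - by rewrite im_fset_split // im_fset_eq_card.
    - by apply/propbP; rewrite -split_conj.
  apply/eqP/pb_ofP => [i i'|i j]; first by rewrite !ffunE => /iS /a_inj.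
  by rewrite !ffunE -ab_l; split => [/iS|->].
move=> /and4P [/injectiveP i1 /injectiveP i2 /eqP HU /propbP Hc] /eqP /(pb_ofP _ i1) hl.
have [|s iS Es] := split_ffun_onto a_inj b_inj cover i1 i2.
  by move=> i j; rewrite hl ab_l.
exists s => //; rewrite unfold_in /=; apply/andP; split.
  apply/andP; split; first exact/injectiveP.
  by rewrite -(im_fset_eq_card iS) -(im_fset_split cover) Es HU.
by apply/propbP; rewrite split_conj // Es.
Qed.

Definition lb_pair (x : embeddings) : classicEq (LB I X * LB I X) :=
  ((im_fset (valfun x.1), conjV (valfun x.1) g), (im_fset (valfun x.2), conjV (valfun x.2) h)).

Lemma Bser_mul_lb_pair x0 : admissible x0 ->
  Bser C n g (lb_pair x0).1 * Bser C k h (lb_pair x0).2 =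
  \sum_(x | admissible x && (lb_pair x == lb_pair x0)) 1.
Proof.
move=> /and4P [_ _ /eqP U0 /propbP Cm0].
rewrite /Bser /=.
rewrite (sum_inj_fset_incl (im_fset_sub x0.1) (fun u => pind C (conjV u g = conjV (valfun x0.1) g))).
rewrite (sum_inj_fset_incl (im_fset_sub x0.2) (fun u => pind C (conjV u h = conjV (valfun x0.2) h))).
rewrite !sum_pind big_distrl /=; under eq_bigr do rewrite mul1r.
rewrite pair_big_dep /=; apply: eq_bigl => -[s t] /=; apply/idP/idP.
  move=> /andP [/andP [/andP [iS /eqP E1] /propbP C1] /andP [/andP [iT /eqP E2] /propbP C2]].
  rewrite /admissible /= iS iT /= E1 E2 U0 eqxx /=; apply/andP; split.
    by apply/propbP; rewrite C1 C2.
  by apply/eqP; rewrite /lb_pair /= E1 E2 C1 C2.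
move=> /andP [/and4P [iS iT _ _] /eqP [E1 C1 E2 C2]].
by rewrite iS iT E1 E2 !eqxx /=; apply/andP; split; apply/propbP.
Qed.

Definition lb_pairs := undup (map lb_pair (enum admissible)).

Lemma sum_lb_pairs :
  \sum_(p <- lb_pairs) Bser C n g p.1 * Bser C k h p.2 = \sum_(x | admissible x) 1.
Proof.
transitivity (\sum_(p <- lb_pairs) \sum_(x | admissible x) ((lb_pair x == p)%:R : C)).
  rewrite big_seq_cond [RHS]big_seq_cond; apply: eq_bigr => p /andP [].
  rewrite mem_undup => /mapP [x0]; rewrite mem_enum => adm0 -> _.
  rewrite Bser_mul_lb_pair // big_mkcondr; apply: eq_bigr => x _; by case: (_ == _).
rewrite exchange_big /=; apply: eq_bigr => x adm.
rewrite -natr_sum (_ : \sum_(p <- lb_pairs) (lb_pair x == p) = count_mem (lb_pair x) lb_pairs)%N.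
  rewrite count_uniq_mem ?undup_uniq // mem_undup map_f //.
  by rewrite mem_enum.
rewrite -sum1_count [RHS]big_mkcond; apply: eq_bigr => p _.
by rewrite /= eq_sym; case: (_ == _).
Qed.

Lemma conv_coef (s0 : {ffun 'I_k -> option 'I_n} -> 'I_n -> nat)
    (t0 : {ffun 'I_k -> option 'I_n} -> 'I_k -> nat) :
  (forall l, isPB l -> choiceOK l (s0 l) (t0 l)) ->
  has_fsum (fun p : LB I X * LB I X =>
      [/\ is_LB p.1, is_LB p.2, p.1.1 `|` p.2.1 = N & p.1.2 \o p.2.2 = nu])
    (fun p => Bser C n g p.1 * Bser C k h p.2)
    (\sum_(l : {ffun 'I_k -> option 'I_n} | isPB l)
        Bser C (n + k - rkPB l) (conjV (s0 l) g \o conjV (t0 l) h) (N, nu)).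
Proof.
move=> choice_ok; exists lb_pairs; split.
- exact: (@uniq_NoDup (classicEq _) _ (undup_uniq _)).
- move=> p /(@List_In_mem (classicEq _)); rewrite mem_undup => /mapP [x].
  rewrite mem_enum => /and4P [/injectiveP i1 /injectiveP i2 /eqP U /propbP Cm] ->.
  by split => //; apply: is_LB_conjV => //; apply: valfun_inj.
- move=> [[F1 f1] [F2 f2]] [_ _ /= U Cm] nz.
  have [s [iS Es Cs]] : exists s : {ffun 'I_n -> N},
      [/\ injective s, im_fset (valfun s) = F1 & conjV (valfun s) g = f1].
    apply: (@Bser_neq0_image C); first by rewrite -U fsubsetUl.
    by apply/eqP => E; apply: nz; rewrite /= E mul0r.
  have [t [iT Et Ct]] : exists t : {ffun 'I_k -> N},
      [/\ injective t, im_fset (valfun t) = F2 & conjV (valfun t) h = f2].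
    apply: (@Bser_neq0_image C); first by rewrite -U fsubsetUr.
    by apply/eqP => E; apply: nz; rewrite /= E mulr0.
  apply/(@List_In_mem (classicEq _)); rewrite mem_undup; apply/mapP; exists (s, t).
    rewrite mem_enum; apply/and4P; split; try exact/injectiveP.
      by rewrite /= Es Et U.
    by apply/propbP; rewrite /= Cs Ct.
  by rewrite /lb_pair /= Es Et Cs Ct.
- rewrite sum_lb_pairs (partition_big pb_of (fun l => isPB l)); last first.
    by move=> x /and4P [_ /injectiveP i2 _ _]; apply: isPB_pb_of.
  by apply: eq_bigr => l Hl; rewrite Bser_class //; apply: choice_ok.
Qed.

End Counting.

Theorem proposition2p2 (C : numClosedFieldType) (I : finType) (X : countType)
    (G : (V I X -> V I X) -> Prop) (HG : is_Ginf G)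
    (n k : nat) (g h : V I X -> V I X) (Hg : inGn G n g) (Hh : inGn G k h)
    (s0 : {ffun 'I_k -> option 'I_n} -> 'I_n -> nat)
    (t0 : {ffun 'I_k -> option 'I_n} -> 'I_k -> nat)
    (Hst : forall l, isPB l -> choiceOK l (s0 l) (t0 l)) :
  is_conv (Bser C n g) (Bser C k h)
    (fun x => \sum_(l : {ffun 'I_k -> option 'I_n} | isPB l)
        Bser C (n + k - rkPB l)%N (conjV (s0 l) g \o conjV (t0 l) h) x).
Proof.
case: HG => G_perm _ _ _ _; case: Hg => Gg g_fix; case: Hh => Gh h_fix.
move=> [N nu]; apply: conv_coef => //; [exact: (G_perm _ Gg).1 | exact: (G_perm _ Gh).1].
Qed.
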